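(* Fix $C\in\mathbb C$ and let $f(x)=C/(x-1)^2\in\mathbb C[[x]]$. Let $b(\lambda,x)=\sum_{k\ge-1}b_k(x)\lambda^{-k-1}$, $b_{-1}=1$, $b_k\in\mathbb C[[x]]$, be the unique such series satisfying $b\,b_{xx}-\frac12b_x^2-2(\lambda-2f)b^2=-2\lambda$, and let $$R(\lambda,x)=\begin{pmatrix}\frac12b_x&b\\(\lambda-2f)b-\frac12b_{xx}&-\frac12b_x\end{pmatrix}.$$ Then $b(\lambda,x)$ depends only on $\zeta:=\lambda(x-1)^2$, namely $b=G_{1/2}(\zeta)$, and $$R=\begin{pmatrix}-\frac{C\lambda^{1/2}}{\zeta^{3/2}}G_{3/2}(\zeta)&G_{1/2}(\zeta)\\\frac{\lambda}{\zeta}\Bigl((\zeta-2C)G_{1/2}(\zeta)-\frac{3C}{\zeta}G_{3/2}(\zeta)-\frac{6C(C+1)}{\zeta^2}G_{5/2}(\zeta)\Bigr)&\frac{C\lambda^{1/2}}{\zeta^{3/2}}G_{3/2}(\zeta)\end{pmatrix},$$ where $\zeta^{3/2}:=\lambda^{3/2}(x-1)^3$, $\Delta:=1-8C$, and $$G_\alpha(\zeta):={}_3F_0\Bigl(\alpha,\alpha+\tfrac{\sqrt\Delta}2,\alpha-\tfrac{\sqrt\Delta}2;;\tfrac1\zeta\Bigr)=\sum_{k\ge0}\frac{(\alpha)_k(\alpha+\frac{\sqrt\Delta}2)_k(\alpha-\frac{\sqrt\Delta}2)_k}{k!}\zeta^{-k}.$$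
   Context: $(a)_k=a(a+1)\cdots(a+k-1)$ is the rising Pochhammer symbol; $G_\alpha$ is a formal series in $\zeta^{-1}$ whose coefficients are polynomials in $\Delta$ (hence in $C$). The matrix $R(\lambda,x)$ is the basic matrix resolvent of the KdV solution with initial data $f$, evaluated at $t_{>0}=0$. *)

(* All objects are formal series over an algebraically closed
   numeric field K (K = C is the case of the paper; the statement is proved for
   every numClosedFieldType, which includes the complex numbers). *)
From mathcomp Require Import all_boot all_order all_algebra.
Set Implicit Arguments. Unset Strict Implicit. Unset Printing Implicit Defensive.
Import Order.TTheory GRing.Theory Num.Theory.
Local Open Scope ring_scope.

Section Defs.
Variable K : numClosedFieldType.

Definition fps := nat -> K.
Definition fconst (c : K) : fps := fun n => if n == 0%N then c else 0.
Definition fone : fps := fconst 1.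
Definition fzero : fps := fun _ => 0.
Definition fadd (a b : fps) : fps := fun n => a n + b n.
Definition fopp (a : fps) : fps := fun n => - a n.
Definition fscale (c : K) (a : fps) : fps := fun n => c * a n.
Definition fmul (a b : fps) : fps :=
  fun n => \sum_(i < n.+1) a i * b (n - i)%N.
Definition fpow (a : fps) (k : nat) : fps := iter k (fmul a) fone.
Definition fderiv (a : fps) : fps := fun n => a n.+1 *+ n.+1.
Definition xm1 : fps := fun n => if n == 0%N then -1 else if n == 1%N then 1 else 0.
(* the series 1/(x-1) = - \sum_n x^n in K[[x]] *)
Definition xm1inv : fps := fun _ => -1.
Definition fdata (C : K) : fps := fscale C (fpow xm1inv 2).

(* ---------- series in lambda^{-1} with coefficients in K[[x]] ----------
   s : ser  represents  \sum_{n>=0} s n * lambda^{-n}. *)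
Definition ser := nat -> fps.
Definition sadd (s t : ser) : ser := fun n => fadd (s n) (t n).
Definition sopp (s : ser) : ser := fun n => fopp (s n).
Definition smul (s t : ser) : ser :=
  fun n k => \sum_(i < n.+1) fmul (s i) (t (n - i)%N) k.
Definition sscale (a : fps) (s : ser) : ser := fun n => fmul a (s n).
Definition sconst (a : fps) : ser := fun n => if n == 0%N then a else fzero.
Definition sshift (s : ser) : ser := fun n => if n is m.+1 then s m else fzero.
Definition sdx (s : ser) : ser := fun n => fderiv (s n).

(* ---------- series  \sum_{n>=0} s n * lambda^{1-n}  (allowing a lambda^1 term) *)
Definition ser1 := nat -> fps.
Definition emb (s : ser) : ser1 := sshift s.
(* multiplication by lambda:  lambda * \sum s n lambda^{-n} = \sum s n lambda^{1-n} *)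
Definition lam (s : ser) : ser1 := s.
Definition s1add (s t : ser1) : ser1 := fun n => fadd (s n) (t n).
Definition s1opp (s : ser1) : ser1 := fun n => fopp (s n).
Definition s1scale (a : fps) (s : ser1) : ser1 := fun n => fmul a (s n).

(* b b_xx - 1/2 b_x^2 - 2 (lambda - 2 f) b^2 = -2 lambda, written as
   [b b_xx - 1/2 b_x^2 + 4 f b^2] - lambda (2 b^2) = lambda (-2)         *)
Definition b_eqn (C : K) (b : ser) : Prop :=
  s1add (emb (sadd (sadd (smul b (sdx (sdx b)))
                         (sopp (sscale (fconst (2^-1)) (smul (sdx b) (sdx b)))))
                   (sscale (fscale 4 (fdata C)) (smul b b))))
        (s1opp (lam (sscale (fconst 2) (smul b b))))
  = lam (sconst (fconst (-2))).

(* b = \sum_{k>=-1} b_k lambda^{-k-1}, i.e. b n = b_{n-1}; b_{-1} = 1 *)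
Definition is_b (C : K) (b : ser) : Prop := b 0%N = fone /\ b_eqn C b.

Definition R11 (b : ser) : ser := sscale (fconst (2^-1)) (sdx b).
Definition R12 (b : ser) : ser := b.
Definition R21 (C : K) (b : ser) : ser1 :=
  s1add (lam b)
        (emb (sopp (sadd (sscale (fscale 2 (fdata C)) b)
                         (sscale (fconst (2^-1)) (sdx (sdx b)))))).
Definition R22 (b : ser) : ser := sopp (R11 b).

Definition poch (a : K) (k : nat) : K := \prod_(i < k) (a + i%:R).
Definition Delta (C : K) : K := 1 - 8 * C.
Definition Gcoef (C alpha : K) (k : nat) : K :=
  poch alpha k * poch (alpha + sqrtC (Delta C) / 2) k
    * poch (alpha - sqrtC (Delta C) / 2) k / (k`!)%:R.
(* multiplication by 1/zeta = lambda^{-1} (x-1)^{-2} *)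
Definition zinv (s : ser) : ser := sshift (sscale (fpow xm1inv 2) s).
(* G_alpha(zeta) = \sum_k Gcoef k zeta^{-k},  zeta^{-k} = lambda^{-k} (x-1)^{-2k} *)
Definition Gser (C alpha : K) : ser :=
  fun n => fscale (Gcoef C alpha n) (fpow xm1inv (2 * n)).
(* multiplication by zeta = lambda (x-1)^2, landing in ser1 *)
Definition zeta_mul (s : ser) : ser1 := lam (sscale (fpow xm1 2) s).
(* multiplication of a ser1 by lambda/zeta = (x-1)^{-2} *)
Definition lam_over_zeta (s : ser1) : ser1 := s1scale (fpow xm1inv 2) s.
(* multiplication by lambda^{1/2}/zeta^{3/2} = lambda^{-1} (x-1)^{-3},
   with zeta^{3/2} := lambda^{3/2} (x-1)^3 *)
Definition lamhalf_over_zeta32 (s : ser) : ser := sshift (sscale (fpow xm1inv 3) s).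

Definition one_half : K := 2^-1.
Definition three_half : K := 3 / 2.
Definition five_half : K := 5 / 2.

End Defs.

(* Write zeta = lambda (x-1)^2.  Series of the form (x-1)^-o \sum_n s_n zeta^-n are
   stable under all operations in the resolvent equation: d/dx multiplies the n-th term
   by -(2n+o) and products convolve the coefficients.  For b = G_{1/2}(zeta) with
   coefficients g_n, the equation thus becomes an identity for the generating series
   g(X), X = 1/zeta: X Q(g) - 2 g^2 = -2, where Q is quadratic in g, theta g and
   theta^2 g, theta = X d/dX.  Applying theta to the left-hand side gives g times the
   third-order hypergeometric operator of 3F0, which annihilates g since
   (k+1) g_{k+1} = (k+1/2)(k^2+k+2C) g_k; so the left-hand side is constant.
   The coefficient of lambda^-n of the equation determines the coefficient of
   lambda^-(n+1) of b from the previous ones, whence uniqueness, and the entries of R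
   follow from the contiguity relations (k+1) G_{1/2,k+1} = C G_{3/2,k} and
   (k+1) G_{3/2,k+1} = 3(1+C) G_{5/2,k}. *)

From mathcomp Require Import all_boot all_order all_algebra.
From mathcomp Require Import ring zify.
From Stdlib Require Import FunctionalExtensionality.
Set Implicit Arguments. Unset Strict Implicit. Unset Printing Implicit Defensive.
Import GRing.Theory Num.Theory.
Local Open Scope ring_scope.

Lemma eq_coefM (R : nzSemiRingType) (p q p' q' : {poly R}) n :
    (forall j, (j <= n)%N -> p`_j = p'`_j) ->
    (forall j, (j <= n)%N -> q`_j = q'`_j) -> (p * q)`_n = (p' * q')`_n.
Proof.
move=> Ep Eq; rewrite !coefM; apply: eq_bigr => i _.
by rewrite Ep ?Eq ?leq_subr // -ltnS.
Qed.

Section EulerOperator.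
Variables (R : comNzRingType) (c : R).
Implicit Types q : {poly R}.

Definition euler q := 'X * q^`().

Lemma coef_euler q k : (euler q)`_k = q`_k * k%:R.
Proof.
by rewrite /euler coefXM; case: k => [|k]; rewrite ?mulr0 // coef_deriv mulr_natr.
Qed.

(* With [X] standing for [1/zeta], [b = \sum_n g_n zeta^-n] solves the resolvent
   equation iff [X * resolvent_quad c g - 2 g^2 = -2]; [resolvent_lin c] is four times the
   differential operator of 3F0(1/2, 1/2 + sqrt(Delta)/2, 1/2 - sqrt(Delta)/2;; X). *)
Definition resolvent_quad q :=
  q * (euler (euler q) *+ 4 + euler q *+ 2) - euler q ^+ 2 *+ 2 + c%:P * q ^+ 2 *+ 4.

Definition resolvent_lin q :=
  'X * (euler (euler (euler q)) *+ 4 + euler (euler q) *+ 6 + euler q *+ 2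
        + c%:P * euler q *+ 8 + c%:P * q *+ 4) - euler q *+ 4.

Lemma euler_resolvent_quad q :
  euler ('X * resolvent_quad q - q ^+ 2 *+ 2) = q * resolvent_lin q.
Proof. rewrite /resolvent_quad /resolvent_lin /euler !derivE; ring. Qed.

End EulerOperator.

Section FormalPowerSeries.
Variable K : numClosedFieldType.
Implicit Types (a b c : fps K) (k l : K).

(* The coefficient of index [n] of a product only involves coefficients of index at
   most [n], so the ring laws of [fps] are inherited from [{poly K}] by truncation. *)
Definition trunc (N : nat) a : {poly K} := \poly_(i < N) a i.

Lemma coef_trunc N a i : (i < N)%N -> (trunc N a)`_i = a i.
Proof. by move=> iN; rewrite coef_poly iN. Qed.

Lemma fmul_trunc N a b n : (n < N)%N -> fmul a b n = (trunc N a * trunc N b)`_n.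
Proof.
move=> nN; rewrite coefM; apply: eq_bigr => i _.
by rewrite !coef_trunc //; [lia | have := ltn_ord i; lia].
Qed.

Lemma fmulC a b : fmul a b = fmul b a.
Proof.
by apply: functional_extensionality => n; rewrite !(@fmul_trunc n.+1) // mulrC.
Qed.

Lemma fmulA a b c : fmul (fmul a b) c = fmul a (fmul b c).
Proof.
apply: functional_extensionality => n.
have truncM p q j :
  (j <= n)%N -> (trunc n.+1 (fmul p q))`_j = (trunc n.+1 p * trunc n.+1 q)`_j.
  by move=> jn; rewrite coef_trunc // (@fmul_trunc n.+1).
rewrite !(@fmul_trunc n.+1) // (eq_coefM (truncM a b) (fun j _ => erefl)) -mulrA.
by apply: eq_coefM => // j /truncM ->.
Qed.

Lemma fmul1r a : fmul (fone K) a = a.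
Proof.
apply: functional_extensionality => n.
rewrite /fmul big_ord_recl big1 => [|i _]; last by rewrite /fone /fconst mul0r.
by rewrite /fone /fconst /= mul1r subn0 addr0.
Qed.

Lemma fmulr1 a : fmul a (fone K) = a.
Proof. by rewrite fmulC fmul1r. Qed.

Lemma fmulr0 a : fmul a (fzero K) = fzero K.
Proof.
by apply: functional_extensionality => n; rewrite /fmul big1 // => i _; rewrite mulr0.
Qed.

Lemma fmulDr a b c : fmul a (fadd b c) = fadd (fmul a b) (fmul a c).
Proof.
apply: functional_extensionality => n.
by rewrite /fmul /fadd -big_split; apply: eq_bigr => i _; rewrite mulrDr.
Qed.

Lemma fmulZr a b k : fmul a (fscale k b) = fscale k (fmul a b).
Proof.
apply: functional_extensionality => n.
by rewrite /fmul /fscale mulr_sumr; apply: eq_bigr => i _; rewrite mulrCA.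
Qed.

Lemma fmulZl a b k : fmul (fscale k a) b = fscale k (fmul a b).
Proof. by rewrite fmulC fmulZr fmulC. Qed.

Lemma fscaleA k l a : fscale k (fscale l a) = fscale (k * l) a.
Proof. by apply: functional_extensionality => n; rewrite /fscale mulrA. Qed.

Lemma fscaleDl k l a : fadd (fscale k a) (fscale l a) = fscale (k + l) a.
Proof. by apply: functional_extensionality => n; rewrite /fadd /fscale mulrDl. Qed.

Lemma fconstE k : fconst k = fscale k (fone K).
Proof.
apply: functional_extensionality => n.
by rewrite /fscale /fone /fconst; case: eqP; rewrite ?mulr1 ?mulr0.
Qed.

Lemma fderivM a b : fderiv (fmul a b) = fadd (fmul (fderiv a) b) (fmul a (fderiv b)).
Proof.
apply: functional_extensionality => n.
rewrite /fderiv /fadd (@fmul_trunc n.+2) // -coef_deriv derivM coefD.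
by congr (_ + _); rewrite (@fmul_trunc n.+1) //; apply: eq_coefM => j jn;
  rewrite ?coef_deriv !coef_trunc //; lia.
Qed.

Lemma fderivZ k a : fderiv (fscale k a) = fscale k (fderiv a).
Proof. by apply: functional_extensionality => n; rewrite /fderiv /fscale mulrnAr. Qed.

End FormalPowerSeries.

Section PowersOfXm1inv.
Variable K : numClosedFieldType.
Local Notation u := (xm1inv K).
Local Notation P := (fpow (xm1inv K)).

Lemma fpowD m n : fmul (P m) (P n) = P (m + n).
Proof. by elim: m => [|m IH]; rewrite ?fmul1r // fmulA IH. Qed.

Lemma fderiv_xm1inv : fderiv u = fscale (-1) (fmul u u).
Proof.
apply: functional_extensionality => n.
rewrite /fderiv /fscale /fmul /xm1inv.
under eq_bigr do rewrite mulrNN mulr1.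
by rewrite sumr_const card_ord mulN1r mulNrn.
Qed.

Lemma fderiv_fpow_xm1inv m : fderiv (P m) = fscale (- m%:R) (P m.+1).
Proof.
elim: m => [|m IH].
  by apply: functional_extensionality => n; rewrite /fderiv /fscale mul0rn oppr0 mul0r.
rewrite [P _]/= fderivM IH fderiv_xm1inv fmulZl fmulZr fmulA fscaleDl.
by congr fscale; rewrite -natr1; ring.
Qed.

Lemma fmul_xm1_xm1inv : fmul (xm1 K) u = fone K.
Proof.
apply: functional_extensionality => -[|n].
  by rewrite /fmul big_ord1 /xm1 /xm1inv /fone /fconst /= mulrNN mulr1.
rewrite /fmul 2!big_ord_recl big1 => [|i _]; last by rewrite /xm1 /= mul0r.
by rewrite /xm1 /xm1inv /fone /fconst /= mulrNN mulr1 mul1r addr0 subrr.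
Qed.

Lemma fpow_xm1inv_xm1 m : fmul (P m) (fpow (xm1 K) m) = fone K.
Proof.
elim: m => [|m IH]; first exact: fmul1r.
rewrite [LHS]/= fmulA -(fmulA (P m)) (fmulC (P m)) fmulA IH fmulr1.
by rewrite fmulC fmul_xm1_xm1inv.
Qed.

End PowersOfXm1inv.

Section LambdaSeries.
Variable K : numClosedFieldType.
Implicit Types s t : ser K.

Lemma ser1E :
  (@s1add K = @sadd K) * (@s1opp K = @sopp K) * (@emb K = @sshift K) * (@s1scale K = @sscale K).
Proof. by []. Qed.

Lemma sscaleDr (a : fps K) s t : sscale a (sadd s t) = sadd (sscale a s) (sscale a t).
Proof. by apply: functional_extensionality => n; rewrite /sscale /sadd fmulDr. Qed.

Lemma sscale_sshift (a : fps K) s : sscale a (sshift s) = sshift (sscale a s).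
Proof. by apply: functional_extensionality => -[|n] //; rewrite /sscale fmulr0. Qed.

Lemma zeta_mulK s : sscale (fpow (xm1inv K) 2) (zeta_mul s) = s.
Proof.
apply: functional_extensionality => n.
by rewrite /zeta_mul /lam /sscale -fmulA fpow_xm1inv_xm1 fmul1r.
Qed.

Lemma soppK s : sopp (sopp s) = s.
Proof.
apply: functional_extensionality => n; apply: functional_extensionality => i.
by rewrite /sopp /fopp opprK.
Qed.

End LambdaSeries.

Section ZetaSeries.
Variable K : numClosedFieldType.
Implicit Types (s t : fps K) (k : K).
Local Notation P := (fpow (xm1inv K)).

(* [zseries o s] is [(x-1)^-o \sum_n s_n zeta^-n], whose coefficient of [lambda^-n]
   is [s_n (x-1)^-(2n+o)]. *)
Definition zseries (o : nat) s : ser K := fun n => fscale (s n) (P (2 * n + o)).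

Definition fmulX s : fps K := fun n => if n is m.+1 then s m else 0.

Definition zderiv (o : nat) s : fps K := fun n => s n * - (2 * n + o)%:R.

Lemma eq_zseries o s t : s =1 t -> zseries o s = zseries o t.
Proof. by move=> st; apply: functional_extensionality => n; rewrite /zseries st. Qed.

Lemma sscale_zseries k m o s :
  sscale (fscale k (P m)) (zseries o s) = zseries (m + o) (fun n => k * s n).
Proof.
apply: functional_extensionality => n.
by rewrite /sscale /zseries fmulZl fmulZr fscaleA fpowD addnCA.
Qed.

Lemma sscale_fpow_zseries m o s : sscale (P m) (zseries o s) = zseries (m + o) s.
Proof.
apply: functional_extensionality => n.
by rewrite /sscale /zseries fmulZr fpowD addnCA.
Qed.

Lemma sscale_fconst_zseries k o s :
  sscale (fconst k) (zseries o s) = zseries o (fun n => k * s n).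
Proof. by rewrite fconstE (sscale_zseries k 0). Qed.

Lemma sadd_zseries o s t : sadd (zseries o s) (zseries o t) = zseries o (fun n => s n + t n).
Proof.
apply: functional_extensionality => n; apply: functional_extensionality => i.
by rewrite /sadd /zseries /fadd /fscale mulrDl.
Qed.

Lemma sopp_zseries o s : sopp (zseries o s) = zseries o (fun n => - s n).
Proof.
apply: functional_extensionality => n; apply: functional_extensionality => i.
by rewrite /sopp /zseries /fopp /fscale mulNr.
Qed.

Lemma smul_zseries o o' s t : smul (zseries o s) (zseries o' t) = zseries (o + o') (fmul s t).
Proof.
apply: functional_extensionality => n; apply: functional_extensionality => i.
rewrite /smul /zseries; under eq_bigr do rewrite fmulZl fmulZr fscaleA fpowD.
rewrite /fscale /fmul mulr_suml; apply: eq_bigr => j _.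
by rewrite (_ : 2 * j + o + (2 * (n - j) + o') = 2 * n + (o + o'))%N //; have := ltn_ord j; lia.
Qed.

Lemma sdx_zseries o s : sdx (zseries o s) = zseries o.+1 (zderiv o s).
Proof.
apply: functional_extensionality => n.
by rewrite /sdx /zseries fderivZ fderiv_fpow_xm1inv fscaleA addnS.
Qed.

Lemma trunc_zderiv N o (s : fps K) :
  trunc N (zderiv o s) = - (euler (trunc N s) *+ 2 + trunc N s *+ o).
Proof.
apply/polyP => i; rewrite coefN coefD !coefMn coef_euler !coef_poly /zderiv.
by case: ifP => _; rewrite ?(mul0r, mul0rn, addr0, oppr0) // natrD natrM; ring.
Qed.

Lemma sshift_zseries o s : sshift (zseries o.+2 s) = zseries o (fmulX s).
Proof.
apply: functional_extensionality => -[|n] /=.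
  by apply: functional_extensionality => i; rewrite /zseries /fscale /fzero mul0r.
by rewrite /zseries (_ : 2 * n.+1 + o = 2 * n + o.+2)%N //; lia.
Qed.

Lemma sconst_fconst k : sconst (fconst k) = zseries 0 (fconst k).
Proof.
apply: functional_extensionality => -[|n]; first by rewrite /zseries /= -fconstE.
by apply: functional_extensionality => i; rewrite /zseries /fscale /fzero mul0r.
Qed.

Lemma zinv_zseries o s : zinv (zseries o s) = zseries o (fmulX s).
Proof. by rewrite /zinv sscale_fpow_zseries add2n sshift_zseries. Qed.

Lemma lamhalf_over_zeta32_zseries o s :
  lamhalf_over_zeta32 (zseries o s) = zseries o.+1 (fmulX s).
Proof.
by rewrite /lamhalf_over_zeta32 sscale_fpow_zseries (_ : 3 + o = o.+3)%N // sshift_zseries.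
Qed.

Lemma Gser_zseries C alpha : Gser C alpha = zseries 0 (Gcoef C alpha).
Proof. by apply: functional_extensionality => n; rewrite /zseries addn0. Qed.

End ZetaSeries.

Section HypergeometricCoefficients.
Variables (K : numClosedFieldType) (C : K).

Lemma poch_recr (a : K) k : poch a k.+1 = poch a k * (a + k%:R).
Proof. by rewrite /poch big_ord_recr. Qed.

Lemma poch_recl (a : K) k : poch a k.+1 = a * poch (a + 1) k.
Proof.
rewrite /poch big_ord_recl addr0; congr (_ * _); apply: eq_bigr => i _.
rewrite /bump /= -natr1; ring.
Qed.

Lemma Gcoef0 alpha : Gcoef C alpha 0 = 1.
Proof. by rewrite /Gcoef /poch !big_ord0 !mul1r invr1. Qed.

Let sqrtDelta_half_sq : (sqrtC (Delta C) / 2) ^+ 2 = Delta C / 4.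
Proof. by rewrite expr_div_n sqrtCK; congr (_ / _); ring. Qed.

Lemma Gcoef_recr alpha k : k.+1%:R * Gcoef C alpha k.+1 =
  (alpha + k%:R) * ((alpha + k%:R) ^+ 2 - Delta C / 4) * Gcoef C alpha k.
Proof.
rewrite /Gcoef !poch_recr factS natrM -sqrtDelta_half_sq.
by field; rewrite nat1r !pnatr_eq0 -lt0n fact_gt0.
Qed.

Lemma Gcoef_recl alpha k : k.+1%:R * Gcoef C alpha k.+1 =
  alpha * (alpha ^+ 2 - Delta C / 4) * Gcoef C (alpha + 1) k.
Proof.
rewrite /Gcoef !poch_recl factS natrM -sqrtDelta_half_sq.
rewrite (addrAC alpha _ 1) (addrAC alpha (- _) 1).
by field; rewrite nat1r !pnatr_eq0 -lt0n fact_gt0.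
Qed.

Local Notation g := (Gcoef C (one_half K)).
Local Notation h3 := (Gcoef C (three_half K)).
Local Notation h5 := (Gcoef C (five_half K)).

Lemma Ghalf_recr k :
  2 * k.+1%:R * g k.+1 = (2 * k%:R + 1) * (k%:R ^+ 2 + k%:R + 2 * C) * g k.
Proof. by rewrite -mulrA Gcoef_recr /Delta /one_half; field. Qed.

Lemma Ghalf_recl k : k.+1%:R * g k.+1 = C * h3 k.
Proof.
rewrite Gcoef_recl /Delta /one_half /three_half (_ : 2^-1 + 1 = 3 / 2 :> K); last by field.
by congr (_ * _); field.
Qed.

Lemma Gthreehalf_recl k : k.+1%:R * h3 k.+1 = 3 * (1 + C) * h5 k.
Proof.
rewrite Gcoef_recl /Delta /three_half /five_half (_ : 3 / 2 + 1 = 5 / 2 :> K); last by field.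
by congr (_ * _); field.
Qed.

End HypergeometricCoefficients.

Section ResolventIdentity.
Variables (K : numClosedFieldType) (C : K) (g : fps K).
Hypothesis g_recr : forall k,
  2 * k.+1%:R * g k.+1 = (2 * k%:R + 1) * (k%:R ^+ 2 + k%:R + 2 * C) * g k.

Lemma coef_resolvent_lin_trunc m j :
  (j <= m.+1)%N -> (resolvent_lin C (trunc m.+2 g))`_j = 0.
Proof.
rewrite /resolvent_lin coefB coefXM; case: j => [|k] /= km.
  by rewrite !coefMn coef_euler mulr0 mul0rn oppr0 addr0.
rewrite !(coefD, coefMn, coefCM, coef_euler) !coef_trunc; try lia.
have kS2_neq0 : 2 * k.+1%:R != 0 :> K by rewrite mulf_neq0 ?pnatr_eq0.
have -> : g k.+1 = (2 * k%:R + 1) * (k%:R ^+ 2 + k%:R + 2 * C) * g k / (2 * k.+1%:R).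
  by rewrite -g_recr mulrC mulKf.
by rewrite -natr1; field; rewrite nat1r pnatr_eq0.
Qed.

Lemma coef_resolvent_quad_trunc m :
  ('X * resolvent_quad C (trunc m.+2 g) - trunc m.+2 g ^+ 2 *+ 2)`_m.+1 = 0.
Proof.
have : (euler ('X * resolvent_quad C (trunc m.+2 g) - trunc m.+2 g ^+ 2 *+ 2))`_m.+1 = 0.
  rewrite euler_resolvent_quad coefM big1 // => i _.
  by rewrite coef_resolvent_lin_trunc ?mulr0 ?leq_subr.
by rewrite coef_euler => /eqP; rewrite mulf_eq0 pnatr_eq0 orbF => /eqP.
Qed.

Lemma zderiv_quadratic m :
  fmul g (zderiv 1 (zderiv 0 g)) m - 2^-1 * fmul (zderiv 0 g) (zderiv 0 g) m
  + 4 * C * fmul g g m - 2 * fmul g g m.+1 = 0.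
Proof.
rewrite !(@fmul_trunc _ m.+2) // !trunc_zderiv -[RHS](coef_resolvent_quad_trunc m).
set p := trunc m.+2 g.
have -> : - (euler (- (euler p *+ 2 + p *+ 0)) *+ 2 + - (euler p *+ 2 + p *+ 0) *+ 1)
    = euler (euler p) *+ 4 + euler p *+ 2 by rewrite /euler !derivE; ring.
have -> : - (euler p *+ 2 + p *+ 0) * - (euler p *+ 2 + p *+ 0) = euler p ^+ 2 *+ 4 by ring.
rewrite /resolvent_quad coefB coefXM /= !(coefD, coefB, coefN, coefMn, coefCM) -!expr2.
by field.
Qed.

End ResolventIdentity.

Section Existence.
Variables (K : numClosedFieldType) (C : K).

Lemma Gser_half_b_eqn : b_eqn C (Gser C (one_half K)).
Proof.
rewrite /b_eqn !ser1E Gser_zseries /lam /fdata fscaleA !sdx_zseries !smul_zseries.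
rewrite !sscale_fconst_zseries sscale_zseries !sopp_zseries !sadd_zseries sshift_zseries.
rewrite sadd_zseries sconst_fconst; apply: eq_zseries => -[|m] /=.
  by rewrite /fmul big_ord1 Gcoef0 !mulr1 sub0r.
exact: zderiv_quadratic (Ghalf_recr C) m.
Qed.

Lemma Gser_half_is_b : is_b C (Gser C (one_half K)).
Proof.
split; last exact: Gser_half_b_eqn.
by apply: functional_extensionality => n; rewrite /Gser Gcoef0 /fscale mul1r.
Qed.

End Existence.

Section Uniqueness.
Variables (K : numClosedFieldType) (C : K).
Implicit Types b : ser K.

(* [b_eqn C b] unfolds to [emb (bquad b) - lam (2 b^2) = lam (-2)]. *)
Definition bquad b : ser K :=
  sadd (sadd (smul b (sdx (sdx b))) (sopp (sscale (fconst (2^-1)) (smul (sdx b) (sdx b)))))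
       (sscale (fscale 4 (fdata C)) (smul b b)).

Lemma eq_smul_le (s s' t t' : ser K) m :
    (forall i, (i <= m)%N -> s i = s' i) -> (forall i, (i <= m)%N -> t i = t' i) ->
  smul s t m = smul s' t' m.
Proof.
move=> Es Et; apply: functional_extensionality => k; rewrite /smul.
by apply: eq_bigr => i _; rewrite Es ?Et ?leq_subr // -ltnS.
Qed.

Lemma eq_bquad_le b b' m : (forall i, (i <= m)%N -> b i = b' i) -> bquad b m = bquad b' m.
Proof.
move=> Eb; have Edx i : (i <= m)%N -> sdx b i = sdx b' i by move=> /Eb; rewrite /sdx => ->.
have Edx2 i : (i <= m)%N -> sdx (sdx b) i = sdx (sdx b') i by move=> /Edx; rewrite /sdx => ->.
rewrite /bquad /sadd /sopp /sscale !(eq_smul_le Eb Eb).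
by rewrite (eq_smul_le Eb Edx2) (eq_smul_le Edx Edx).
Qed.

Lemma smul_recr b n k : b 0%N = fone K ->
  smul b b n.+1 k = 2 * b n.+1 k + \sum_(i < n) fmul (b i.+1) (b (n - i)%N) k.
Proof.
move=> b0; rewrite /smul big_ord_recl big_ord_recr /= subn0 subnn b0 fmul1r fmulr1.
under eq_bigr do rewrite /bump /= add1n subSS.
ring.
Qed.

Lemma is_b_recr b n k : is_b C b ->
  4 * b n.+1 k = bquad b n k - 2 * \sum_(i < n) fmul (b i.+1) (b (n - i)%N) k.
Proof.
case=> b0 /(congr1 (fun s : ser1 K => s n.+1 k)).
rewrite /s1add /emb /s1opp /lam /fadd /fopp /= -/(bquad b) /sscale fconstE fmulZl fmul1r.
by rewrite /fscale smul_recr // => /eqP; rewrite subr_eq0 => /eqP ->; ring.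
Qed.

Lemma is_b_unique b b' : is_b C b -> is_b C b' -> b = b'.
Proof.
move=> Hb Hb'; suff Ebb' n i : (i <= n)%N -> b i = b' i.
  by apply: functional_extensionality => n; apply: (Ebb' n).
elim: n i => [|n IH] i; first by rewrite leqn0 => /eqP ->; rewrite Hb.1 Hb'.1.
rewrite leq_eqVlt ltnS => /predU1P[-> | /IH //].
have four_neq0 : 4 != 0 :> K by rewrite pnatr_eq0.
apply: functional_extensionality => k; apply: (mulfI four_neq0).
rewrite !is_b_recr // (eq_bquad_le IH); congr (_ - 2 * _).
by apply: eq_bigr => j _; rewrite !IH // ?leq_subr //; have := ltn_ord j; lia.
Qed.

End Uniqueness.

Section Resolvent.
Variables (K : numClosedFieldType) (C : K).
Local Notation g := (Gcoef C (one_half K)).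
Local Notation h3 := (Gcoef C (three_half K)).
Local Notation h5 := (Gcoef C (five_half K)).

Lemma half_zderiv_Ghalf n : 2^-1 * zderiv 0 g n = - (C * fmulX h3 n).
Proof.
case: n => [|k]; rewrite /zderiv /=; first by rewrite !(muln0, addn0, mulr0n, oppr0, mulr0).
by rewrite -(Ghalf_recl C k) addn0 natrM; field.
Qed.

Lemma half_zderiv2_Ghalf n :
  2^-1 * zderiv 1 (zderiv 0 g) n = 3 * C * fmulX h3 n + 6 * C * (C + 1) * fmulX (fmulX h5) n.
Proof.
rewrite /zderiv /= addn0 natrD natrM.
case: n => [|[|j]] /=.
- by rewrite !(mulr0n, mulr0, oppr0, mul0r, addr0).
- by rewrite mulr0 addr0 -[3 * C * _]mulrA -(Ghalf_recl C 0); field.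
have -> : 2^-1 * (g j.+2 * - (2 * j.+2%:R) * - (2 * j.+2%:R + 1))
    = j.+2%:R * g j.+2 * (2 * j.+2%:R + 1) by field.
rewrite Ghalf_recl (_ : 6 * C * (C + 1) * h5 j = 2 * C * (3 * (1 + C) * h5 j)); last by ring.
by rewrite -Gthreehalf_recl -!natr1; ring.
Qed.

Lemma R11_Gser_half : R11 (Gser C (one_half K)) =
  sopp (sscale (fconst C) (lamhalf_over_zeta32 (Gser C (three_half K)))).
Proof.
rewrite /R11 !Gser_zseries sdx_zseries lamhalf_over_zeta32_zseries !sscale_fconst_zseries.
by rewrite sopp_zseries; apply: eq_zseries => n; rewrite half_zderiv_Ghalf.
Qed.

Lemma R21_Gser_half :
  R21 C (Gser C (one_half K)) =
  lam_over_zeta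
    (s1add (s1add (zeta_mul (Gser C (one_half K)))
                  (emb (sopp (sscale (fconst (2 * C)) (Gser C (one_half K))))))
           (emb (sopp (sadd (sscale (fconst (3 * C)) (zinv (Gser C (three_half K))))
                            (sscale (fconst (6 * C * (C + 1)))
                                    (zinv (zinv (Gser C (five_half K))))))))).
Proof.
rewrite /R21 /lam_over_zeta !ser1E !sscaleDr zeta_mulK /lam /fdata fscaleA !Gser_zseries.
rewrite !(zinv_zseries, sdx_zseries, sscale_fconst_zseries, sscale_zseries, sscale_fpow_zseries).
rewrite !(sscale_sshift, sscale_fpow_zseries, sopp_zseries, sadd_zseries).
rewrite !(add0n, addn0, sshift_zseries, sopp_zseries, sadd_zseries).
apply: eq_zseries => -[|n] /=; first by rewrite !addr0.
by rewrite half_zderiv2_Ghalf; ring.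
Qed.

End Resolvent.

Unset Implicit Arguments.
Set Strict Implicit.

Theorem theorem1p9 (K : numClosedFieldType) (C : K) :
  (exists b : ser K, is_b C b) /\
  (forall b : ser K, is_b C b ->
     [/\ b = Gser C (one_half K),
         R11 b = sopp (sscale (fconst C) (lamhalf_over_zeta32 (Gser C (three_half K)))),
         R12 b = Gser C (one_half K),
         R21 C b =
           lam_over_zeta
             (s1add (s1add (zeta_mul (Gser C (one_half K)))
                           (emb (sopp (sscale (fconst (2 * C)) (Gser C (one_half K))))))
                    (emb (sopp (sadd (sscale (fconst (3 * C)) (zinv (Gser C (three_half K))))
                                     (sscale (fconst (6 * C * (C + 1)))
                                             (zinv (zinv (Gser C (five_half K)))))))))
       & R22 b = sscale (fconst C) (lamhalf_over_zeta32 (Gser C (three_half K)))]).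
Proof.
split; first by exists (Gser C (one_half K)); exact: Gser_half_is_b.
move=> b /is_b_unique /(_ (Gser_half_is_b C)) ->.
split=> //; [exact: R11_Gser_half | exact: R21_Gser_half |].
by rewrite /R22 R11_Gser_half soppK.
Qed.
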